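(* Let $m\ge1$ and let $j\colon K_m\to\mathbb Z^{2m-1}$ be $j(f,0)=(f(-m+1),\dots,f(m-1))$. Then for all $x,y\in K_m$, $$d(x,y)-4(m-1)\ \le\ d_1(j(x),j(y))\ \le\ d(x,y),$$ where $d$ is the word metric of $\mathbb Z\wr\mathbb Z$ and $d_1$ is the $\ell^1$ metric on $\mathbb Z^{2m-1}$.
   Context: The lamplighter group $\mathbb Z\wr\mathbb Z$ consists of pairs $(f,n)$ with $f\colon\mathbb Z\to\mathbb Z$ finitely supported and $n\in\mathbb Z$, with product $(f,n)(g,n')=(f+g(\cdot-n),\,n+n')$; it is equipped with the left-invariant word metric $d$ for the generators $a=(\delta_0,0)$ and $t=(0,1)$. $K=\{(f,0)\}$ and $K_m=\{(f,0):\operatorname{supp}f\subseteq\{-m+1,\dots,m-1\}\}$, with the metric restricted from $d$. *)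

From HB Require Import structures.
From mathcomp Require Import all_boot all_order all_algebra.
From mathcomp Require Import finmap.
From Stdlib Require Import ClassicalEpsilon.
Set Implicit Arguments. Unset Strict Implicit. Unset Printing Implicit Defensive.
Import Order.TTheory GRing.Theory Num.Theory.
Local Open Scope ring_scope.

(* Elements (f, n) of the lamplighter group Z wr Z:
   f : Z -> Z finitely supported (default value 0), n : Z. *)
Definition LL := ({fsfun int -> int with 0%R} * int)%type.

(* Generators and their inverses: (false,false) = a, (false,true) = a^-1,
   (true,false) = t, (true,true) = t^-1. *)
Definition gen := (bool * bool)%type.

(* Right multiplication x * s by a generator s, using the product
   (f,n)(g,n') = (f + g(. - n), n + n') with a = (delta_0, 0), t = (0, 1). *)
Definition act (x : LL) (s : gen) : LL :=
  let: (f, n) := x in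
  match s with
  | (false, false) => ([fsfun f with n |-> f n + 1], n)
  | (false, true)  => ([fsfun f with n |-> f n - 1], n)
  | (true, false)  => (f, n + 1)
  | (true, true)   => (f, n - 1)
  end.

Definition reach (x y : LL) (k : nat) : bool :=
  [exists w : k.-tuple gen, foldl act x w == y].

(* Left-invariant word metric: d(x,y) = |x^-1 y| = least length of a word w
   with x * w = y.  (The fallback value 0 is never used since a, t generate.) *)
Definition wdist (x y : LL) : nat :=
  match excluded_middle_informative (exists k, reach x y k) with
  | left H => ex_minn H
  | right _ => 0%N
  end.

Definition inKm (m : nat) (x : LL) : Prop :=
  x.2 = 0 /\ forall i : int, x.1 i != 0 -> (- (m%:Z) < i < m%:Z).

Definition jmap (m : nat) (x : LL) : 'rV[int]_(2 * m - 1) :=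
  \row_(i < 2 * m - 1) x.1 ((i : nat)%:Z - (m%:Z - 1)).

Definition d1 (k : nat) (u v : 'rV[int]_k) : int :=
  \sum_(i < k) `|u 0 i - v 0 i|.

From mathcomp Require Import all_boot all_order all_algebra.
From mathcomp Require Import finmap zify.
From Stdlib Require Import ClassicalEpsilon.
Import Order.TTheory GRing.Theory Num.Theory.
Local Open Scope ring_scope.

(* A generator changes one lamp by +-1 or moves the lamplighter, so each step
   moves [jmap] by at most 1 in l^1, whence d1 <= d.  Conversely, (g,0) is
   reached from (f,0) by walking left to -(m-1), sweeping right to m-1 while
   correcting each lamp by g - f, and walking back to 0: the corrections cost
   d1 and the walking 4(m-1). *)

Definition lamp_word (c : int) : seq gen := nseq `|c|%N (false, c < 0).

Lemma foldl_act_a_pow h n k b :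
  foldl act (h, n) (nseq k (false, b)) =
    ([fsfun h with n |-> h n + (if b then - k%:Z else k%:Z)], n).
Proof.
elim: k h => [|k IH] h /=.
  congr (_, _); apply/fsfunP => j; rewrite fsfun_withE.
  by case: (j =P n) => [->|]; case: b; lia.
case: b IH => IH; rewrite IH; congr (_, _); apply/fsfunP => j;
  rewrite !fsfun_withE eqxx; case: (j == n); lia.
Qed.

Lemma foldl_act_lamp_word h n c :
  foldl act (h, n) (lamp_word c) = ([fsfun h with n |-> h n + c], n).
Proof.
rewrite foldl_act_a_pow; congr ([fsfun h with n |-> h n + _], n).
by case: ltP; lia.
Qed.

Lemma foldl_act_t_pow h n k b :
  foldl act (h, n) (nseq k (true, b)) = (h, if b then n - k%:Z else n + k%:Z).
Proof.
elim: k n => [|k IH] n /=; first by case: b; rewrite ?subr0 ?addr0.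
by case: b IH => IH /=; rewrite IH; congr (_, _); lia.
Qed.

Fixpoint sweep (e : nat -> int) (k : nat) : seq gen :=
  if k is k'.+1 then sweep e k' ++ (true, false) :: lamp_word (e k)
  else lamp_word (e 0%N).

Lemma size_sweep e k : size (sweep e k) = (k + \sum_(i < k.+1) `|e i|)%N.
Proof.
elim: k => [|k IH] /=; first by rewrite big_ord_recr big_ord0 size_nseq.
by rewrite size_cat /= size_nseq IH [in RHS]big_ord_recr /= addnS addSn addnA.
Qed.

Lemma foldl_act_sweep h p e k :
  (foldl act (h, p) (sweep e k)).2 = p + k%:Z /\
  forall j, (foldl act (h, p) (sweep e k)).1 j =
    h j + (if (p <= j) && (j <= p + k%:Z) then e `|j - p|%N else 0).
Proof.
elim: k => [|k IH].
  rewrite /= foldl_act_lamp_word /=; split=> [|j]; first lia.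
  rewrite fsfun_withE; case: (j =P p) => [->|Hj].
    by rewrite subrr; have -> : (p <= p <= p + 0%Z) by lia.
  have -> : (p <= j <= p + 0%Z) = false by lia.
  by rewrite addr0.
rewrite /= foldl_cat; case: (foldl act (h, p) (sweep e k)) IH => h' p' [/= -> IH].
rewrite foldl_act_lamp_word; split=> [|j] /=; first lia.
rewrite fsfun_withE !IH; case: (j =P p + k + 1) => [->|Hj].
  have -> : (p <= p + k + 1 <= p + k) = false by lia.
  have -> : (p <= p + k + 1 <= p + k.+1) by lia.
  have -> : `|(p + k%:Z + 1 - p)%R|%N = k.+1 by lia.
  by rewrite addr0.
by have -> : (p <= j <= p + k.+1) = (p <= j <= p + k) :> bool by lia.
Qed.

Lemma reach_foldl x w : reach x (foldl act x w) (size w).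
Proof. by apply/existsP; exists (in_tuple w). Qed.

Lemma wdist_min {x y k} : reach x y k -> (wdist x y <= k)%N.
Proof.
rewrite /wdist => reach_k; case: excluded_middle_informative => [?|[]]; last by exists k.
by case: ex_minnP => n _; apply.
Qed.

Lemma reach_wdist {x y k} : reach x y k -> reach x y (wdist x y).
Proof.
rewrite /wdist => reach_k; case: excluded_middle_informative => [?|[]]; last by exists k.
by case: ex_minnP.
Qed.

Lemma sum_indicator_inj_le1 k (q : 'I_k -> int) (n : int) :
  injective q -> \sum_(i < k) (if q i == n then 1 else 0 : int) <= 1.
Proof.
move=> q_inj; case: (pickP (fun i => q i == n)) => [i0 qi0 | noq].
  rewrite (bigD1 i0) //= qi0 big1 ?addr0 // => i; apply: contraNeq => /eqP.
  by case: eqP => // qi _; apply/eqP/q_inj; rewrite qi (eqP qi0).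
by rewrite big1 // => i _; rewrite noq.
Qed.

Lemma d1_triangle {k} (u v w : 'rV[int]_k) : d1 u w <= d1 u v + d1 v w.
Proof. by rewrite /d1 -big_split; apply: ler_sum => i _; apply: ler_distD. Qed.

Lemma d1_refl k (u : 'rV[int]_k) : d1 u u = 0.
Proof. by rewrite /d1 big1 // => i _; rewrite subrr normr0. Qed.

Lemma d1_jmap_act m z s : d1 (jmap m z) (jmap m (act z s)) <= 1.
Proof.
case: z => h n; rewrite /d1 /jmap.
have q_inj : injective (fun i : 'I_(2 * m - 1) => (i : nat)%:Z - (m%:Z - 1)).
  by move=> i j /= E; apply: val_inj => /=; lia.
case: s => [[] []] /=; try by rewrite big1 // => i _; rewrite !mxE subrr normr0.
all: apply: le_trans (@sum_indicator_inj_le1 _ _ n q_inj); apply: ler_sum => i _.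
all: by rewrite !mxE /= fsfun_withE; case: eqP => [->|_]; lia.
Qed.

Lemma d1_jmap_foldl m z w : d1 (jmap m z) (jmap m (foldl act z w)) <= (size w)%:Z.
Proof.
elim/last_ind: w => [|w s IH]; first by rewrite d1_refl.
rewrite foldl_rcons size_rcons.
apply: le_trans (d1_triangle _ (jmap m (foldl act z w)) _) _.
by have := d1_jmap_act m (foldl act z w) s; lia.
Qed.

Lemma d1_jmap_le_wdist m {x y k} :
  reach x y k -> d1 (jmap m x) (jmap m y) <= (wdist x y)%:Z.
Proof.
move/reach_wdist/existsP => [w /eqP w_xy].
by have := d1_jmap_foldl m x w; rewrite w_xy size_tuple.
Qed.

Lemma d1_ge0 {k} (u v : 'rV[int]_k) : 0 <= d1 u v.
Proof. by apply: sumr_ge0 => i _; apply: normr_ge0. Qed.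

Lemma d1_jmap_window M x y :
  d1 (jmap M.+1 x) (jmap M.+1 y) =
    (\sum_(i < (2 * M).+1) `|(y.1 (i%:Z - M%:Z) - x.1 (i%:Z - M%:Z))%R|%N)%:Z.
Proof.
rewrite /d1 /jmap; have : (2 * M.+1 - 1 = (2 * M).+1)%N by lia.
move: (2 * M.+1 - 1)%N => n ->.
rewrite (big_morph Posz PoszD (erefl 0%:Z)); apply: eq_bigr => i _.
rewrite !mxE abszE distrC; congr `|y.1 _ - x.1 _|; lia.
Qed.

Lemma reach_Km {M x y} : inKm M.+1 x -> inKm M.+1 y ->
  reach x y (4 * M + `|d1 (jmap M.+1 x) (jmap M.+1 y)|)%N.
Proof.
case: x => f n; case: y => g n' [/= -> f_supp] [/= -> g_supp].
rewrite d1_jmap_window absz_nat /=.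
pose e (i : nat) := g (i%:Z - M%:Z) - f (i%:Z - M%:Z).
pose w := nseq M (true, true) ++ sweep e (2 * M) ++ nseq M (true, true).
have -> : (4 * M + \sum_(i < (2 * M).+1) `|e i|)%N = size w.
  by rewrite !size_cat size_sweep !size_nseq; lia.
suff <- : foldl act (f, 0) w = (g, 0) by apply: reach_foldl.
rewrite !foldl_cat foldl_act_t_pow.
have [] := foldl_act_sweep f (0 - M%:Z) e (2 * M).
case: (foldl act _ (sweep e (2 * M))) => h p /= -> sweepE.
rewrite foldl_act_t_pow; congr (_, _); last lia.
apply/fsfunP => j; rewrite sweepE; case: ifP => j_in.
  rewrite /e; have -> : (`|(j - (0 - M%:Z))%R|%N%:Z - M%:Z) = j by lia.
  by rewrite addrC subrK.
move/negbT: j_in => j_out.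
have f0 : f j = 0 by apply: contraNeq j_out => /f_supp; lia.
have g0 : g j = 0 by apply: contraNeq j_out => /g_supp; lia.
by rewrite f0 g0.
Qed.

Theorem lemma4p2p4 (m : nat) (x y : LL) :
  (1 <= m)%N -> inKm m x -> inKm m y ->
  (wdist x y)%:Z - 4 * (m%:Z - 1) <= d1 (jmap m x) (jmap m y) <= (wdist x y)%:Z.
Proof.
case: m => [//|M] _ xK yK; have reach_xy := reach_Km xK yK.
have := wdist_min reach_xy; have := d1_jmap_le_wdist M.+1 reach_xy.
have := d1_ge0 (jmap M.+1 x) (jmap M.+1 y).
by move: (d1 _ _) (wdist _ _) => D W; lia.
Qed.
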